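(* Let $M\subset\bigoplus_{i=1}^rA[-\delta_i]$ be a graded right $A$-submodule and $M'=L(M)$. For every $d\ge0$, $\iota(M_d)=M'(d)_d$, where $M'(d)=M'\cap\bigoplus_iS(\delta_i,d)[-\delta_i]$ (the set of elements $\sum_ie'_ih_i$ of $M'$ with $h_i\in S(\delta_i,d)$). In particular $\dim_{\mathbb K}M_d=\dim_{\mathbb K}M'(d)_d$.
   Context: Let $\mathbb K$ be a field, $F=\mathbb K\langle x_1,\dots,x_n\rangle$ with standard grading, $I\subset F$ a graded two-sided ideal, $A=F/I$, $A[-\delta]_d=A_{d-\delta}$, $\bigoplus_{i=1}^rA[-\delta_i]$ the graded free right $A$-module with basis $e_i$ of degree $\delta_i$. Let $P=\mathbb K[x_{ij}\mid1\le i\le n,j\ge1]$ (commutative, $\deg x_{ij}=1$), $Q$ the ideal generated by all $x_{ij}x_{kj}$, $R=P/Q$, $\sigma:x_{ij}\mapsto x_{i,j+1}$, $\iota:F\to R$ the $\mathbb K$-linear map $x_{i_1}\cdots x_{i_d}\mapsto x_{i_11}\cdots x_{i_dd}$, $J$ the ideal of $R$ generated by $\bigcup_{k\ge0}\sigma^k(\iota(I))$, $S=R/J$ (with induced $\sigma$ and induced injective graded linear $\iota:A\to S$). For integers $0\le\delta\le d$, $S(\delta,d)$ is the subalgebra of $S$ generated by the cosets of $x_{ij}$ with $1\le i\le n$, $\delta<j\le d$. $\bigoplus_iS[-\delta_i]$ is the graded free $S$-module with basis $e'_i$ of degree $\delta_i$, and $\iota:\bigoplus_iA[-\delta_i]\to\bigoplus_iS[-\delta_i]$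 is the $\mathbb K$-linear map $e_if\mapsto e'_i\sigma^{\delta_i}(\iota(f))$. For a graded right submodule $M$, its letterplace analogue $L(M)$ is the $S$-submodule of $\bigoplus_iS[-\delta_i]$ generated by $\iota(M)$. *)

From HB Require Import structures.
From mathcomp Require Import all_boot all_order all_algebra.
Set Implicit Arguments. Unset Strict Implicit. Unset Printing Implicit Defensive.
Import GRing.Theory.
Local Open Scope ring_scope.

(* K-vector spaces on a monomial basis T, i.e. coefficient functions). *)
Section FunOps.
Variables (K : fieldType) (T : Type).
Definition fzero : T -> K := fun _ => 0.
Definition fadd (f g : T -> K) : T -> K := fun t => f t + g t.
Definition fsub (f g : T -> K) : T -> K := fun t => f t - g t.
Definition fscale (c : K) (f : T -> K) : T -> K := fun t => c * f t.
End FunOps.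

Definition fin_supp (K : fieldType) (T : eqType) (P : pred T) (f : T -> K) :=
  exists s : seq T, forall t, f t != 0 -> (t \in s) && P t.

(* Vectors with r components (elements of free modules with basis e_i). *)
Section VecOps.
Variables (K : fieldType) (T : Type) (r : nat).
Definition vzero : 'I_r -> T -> K := fun _ => @fzero K T.
Definition vadd (u v : 'I_r -> T -> K) : 'I_r -> T -> K := fun i => fadd (u i) (v i).
Definition vsub (u v : 'I_r -> T -> K) : 'I_r -> T -> K := fun i => fsub (u i) (v i).
Definition vscale (c : K) (u : 'I_r -> T -> K) : 'I_r -> T -> K :=
  fun i => fscale c (u i).
Definition lcomb (k : nat) (c : 'I_k -> K) (b : 'I_k -> 'I_r -> T -> K)
  : 'I_r -> T -> K := fun i t => \sum_(j < k) c j * b j i t.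
(* dim_K (U / W) = k, for subspaces W <= U : a basis of U modulo W of size k *)
Definition qdim (U W : ('I_r -> T -> K) -> Prop) (k : nat) : Prop :=
  exists b : 'I_k -> 'I_r -> T -> K,
    (forall j, U (b j)) /\
    (forall c : 'I_k -> K, W (lcomb c b) -> forall j, c j = 0) /\
    (forall u, U u -> exists c : 'I_k -> K, W (vsub u (lcomb c b))).
End VecOps.

(* The free associative algebra F = K<x_1..x_n>: K-basis = words.      *)
Section FreeAlg.
Variables (K : fieldType) (n : nat).
Definition word := seq 'I_n.
Definition Fpoly := word -> K.
Definition is_Fpoly (f : Fpoly) := fin_supp predT f.
Definition mulF (f g : Fpoly) : Fpoly :=
  fun w => \sum_(k < (size w).+1) f (take k w) * g (drop k w).
Definition hpartF (k : nat) (f : Fpoly) : Fpoly :=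
  fun w => if size w == k then f w else 0.

Record graded_twosided_ideal (I : Fpoly -> Prop) : Prop := {
  gi_poly : forall f, I f -> is_Fpoly f;
  gi_zero : I (@fzero K word);
  gi_add : forall f g, I f -> I g -> I (fadd f g);
  gi_scale : forall c f, I f -> I (fscale c f);
  gi_lmul : forall f g, is_Fpoly g -> I f -> I (mulF g f);
  gi_rmul : forall f g, is_Fpoly g -> I f -> I (mulF f g);
  gi_graded : forall f k, I f -> I (hpartF k f) }.

(* Elements of F^r, with basis vector e_i of degree delta_i. *)
Definition Fvec (r : nat) := 'I_r -> Fpoly.
Definition hvecF r (delta : 'I_r -> nat) (d : nat) (m : Fvec r) : Fvec r :=
  fun i w => if size w + delta i == d then m i w else 0.
Definition homvecF r (delta : 'I_r -> nat) (d : nat) (m : Fvec r) : Prop :=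
  forall i w, m i w != 0 -> size w + delta i = d.

(* A graded right A-submodule of (+)_i A[-delta_i], A = F/I, represented by
   its (I-saturated) preimage M in F^r: M is a graded right F-submodule of
   (+)_i F[-delta_i] containing (+)_i e_i I. *)
Record graded_right_submodule r (I : Fpoly -> Prop) (delta : 'I_r -> nat)
    (M : Fvec r -> Prop) : Prop := {
  gm_poly : forall m, M m -> forall i, is_Fpoly (m i);
  gm_zero : M (@vzero K word r);
  gm_add : forall m m', M m -> M m' -> M (vadd m m');
  gm_scale : forall c m, M m -> M (vscale c m);
  gm_rmul : forall m g, is_Fpoly g -> M m -> M (fun i => mulF (m i) g);
  gm_satI : forall m, (forall i, I (m i)) -> M m;
  gm_graded : forall m d, M m -> M (hvecF delta d m) }.
End FreeAlg.

(* The commutative polynomial ring P = K[x_ij | 1<=i<=n, j>=1].        *)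
(* A monomial is a multiset of variables (i,j), represented canonically *)
(* as the list of its variables sorted by column, then by letter.      *)
Section Letterplace.
Variables (K : fieldType) (n : nat).
Definition pvar := ('I_n * nat)%type.
Definition pmon := seq pvar.
Definition lek (a b : pvar) : bool :=
  (a.2 < b.2)%N || ((a.2 == b.2) && (a.1 <= b.1)%N).
Definition validP (u : pmon) : bool := sorted lek u && all (fun p => 0 < p.2)%N u.
Definition Ppoly := pmon -> K.
Definition is_Ppoly (f : Ppoly) := fin_supp validP f.
Definition mono (u : pmon) : Ppoly := fun t => (t == u)%:R.
Definition xmul (v : pvar) (f : Ppoly) : Ppoly :=
  fun u => if validP u && (v \in u) then f (rem v u) else 0.
(* iota : F -> P, x_{i1}..x_{id} |-> x_{i1,1} .. x_{id,d} (linear) *)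
Definition lpmon (w : word n) : pmon := zip w (iota 1 (size w)).
Definition iotaF (f : Fpoly K n) : Ppoly :=
  fun u => if u == lpmon (map fst u) then f (map fst u) else 0.
(* sigma : x_ij |-> x_{i,j+1} (algebra endomorphism) *)
Definition sigmaP (f : Ppoly) : Ppoly :=
  fun u => if validP u && all (fun p => 1 < p.2)%N u
           then f [seq (p.1, p.2.-1) | p <- u] else 0.

Inductive ideal_gen (G : Ppoly -> Prop) : Ppoly -> Prop :=
| ig_base f : G f -> ideal_gen G f
| ig_zero : ideal_gen G (@fzero K pmon)
| ig_add f g : ideal_gen G f -> ideal_gen G g -> ideal_gen G (fadd f g)
| ig_scale c f : ideal_gen G f -> ideal_gen G (fscale c f)
| ig_xmul v f : (0 < v.2)%N -> ideal_gen G f -> ideal_gen G (xmul v f).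

Definition Qgen (f : Ppoly) : Prop :=
  exists (i k : 'I_n) (j : nat), (0 < j)%N /\ f = xmul (i, j) (xmul (k, j) (mono [::])).
Definition Igen (I : Fpoly K n -> Prop) (f : Ppoly) : Prop :=
  exists (k : nat) (g : Fpoly K n), I g /\ f = iter k sigmaP (iotaF g).
(* preimage in P of J (ideal of R = P/Q); S = R/J = P / Jpre *)
Definition Jpre (I : Fpoly K n -> Prop) : Ppoly -> Prop :=
  ideal_gen (fun f => Qgen f \/ Igen I f).

Section Modules.
Variable r : nat.
Definition Pvec := 'I_r -> Ppoly.
(* iota : (+)_i A[-delta_i] -> (+)_i S[-delta_i], e_i f |-> e'_i sigma^delta_i(iota f) *)
Definition iota_vec (delta : 'I_r -> nat) (m : Fvec K n r) : Pvec :=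
  fun i => iter (delta i) sigmaP (iotaF (m i)).

Inductive submod_gen (G : Pvec -> Prop) : Pvec -> Prop :=
| sg_base g : G g -> submod_gen G g
| sg_zero : submod_gen G (@vzero K pmon r)
| sg_add g h : submod_gen G g -> submod_gen G h -> submod_gen G (vadd g h)
| sg_scale c g : submod_gen G g -> submod_gen G (vscale c g)
| sg_xmul v g : (0 < v.2)%N -> submod_gen G g -> submod_gen G (fun i => xmul v (g i)).

Variables (I : Fpoly K n -> Prop) (delta : 'I_r -> nat) (M : Fvec K n r -> Prop).

(* vectors with all entries in Jpre (preimage of 0 in S^r) *)
Definition Jvec (g : Pvec) : Prop := forall i, Jpre I (g i).
(* vectors with all entries in I (preimage of 0 in A^r) *)
Definition Ivec (m : Fvec K n r) : Prop := forall i, I (m i).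

(* preimage in P^r of M' = L(M) : S-submodule generated by iota(M) *)
Definition Lpre : Pvec -> Prop :=
  submod_gen (fun g => (exists m, M m /\ g = iota_vec delta m) \/ Jvec g).

Definition in_Ksub (dl d : nat) (h : Ppoly) : Prop :=
  is_Ppoly h /\ forall u, h u != 0 -> all (fun p => (dl < p.2 <= d)%N) u.

(* preimage in F^r of M_d *)
Definition Md_pre (d : nat) (m : Fvec K n r) : Prop :=
  exists m0, M m0 /\ homvecF delta d m0 /\ Ivec (vsub m m0).

(* preimage in P^r of iota(M_d) *)
Definition iotaMd_pre (d : nat) (g : Pvec) : Prop :=
  exists m, M m /\ homvecF delta d m /\ Jvec (vsub g (iota_vec delta m)).

(* preimage in P^r of M'(d)_d, M'(d) = M' /\ (+)_i S(delta_i,d)[-delta_i] *)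
Definition Mpd_pre (d : nat) (g : Pvec) : Prop :=
  Lpre g /\
  (exists h : Pvec, (forall i, in_Ksub (delta i) d (h i)) /\ Jvec (vsub g h)) /\
  (exists h : Pvec, (forall i, is_Ppoly (h i)) /\
                    (forall i u, h i u != 0 -> (size u + delta i)%N = d) /\
                    Jvec (vsub g h)).
End Modules.
End Letterplace.

From HB Require Import structures.
From mathcomp Require Import all_boot all_order all_algebra.
From mathcomp Require Import zify ring.
From Stdlib Require Import FunctionalExtensionality Classical.
Set Implicit Arguments. Unset Strict Implicit. Unset Printing Implicit Defensive.
Import GRing.Theory.
Local Open Scope ring_scope.

(* For an offset o, the placed part of a polynomial of P is its restriction to
   the monomials x_{i_1,o+1} ... x_{i_e,o+e} with o + e = d, i.e. to the
   monomials of sigma^o iota(w) for the words w of length d - o.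
   The heart of the proof is that the placed part of any monomial multiple of a
   generator of J is sigma^o iota of an element of I_(d-o): a multiple of
   x_ij x_kj has no placed monomial, and a monomial u times sigma^k iota(g) is
   placed only if u fills the columns around a block of columns k+1, ..., so that
   its placed part is sigma^o iota of a word product a g b.  Consequently the
   placed part at delta_i of the i-th entry of an element of L(M) is iota of an
   element of M_d, and iota is injective on M_d modulo I.
   Conversely, an element of M'(d)_d is congruent modulo J to polynomials in the
   columns delta_i < j <= d of degree d - delta_i, and such a polynomial is
   congruent modulo Q to its placed part: a monomial with d - delta_i variables
   in as many columns either uses every column once, and is then placed, or
   repeats a column and lies in Q.  So the element agrees modulo J with its
   placed part, which lies in iota(M_d).
   Finally iota maps a basis of the finite-dimensional M_d modulo I to a basis
   of M'(d)_d modulo J. *)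

Section SeqLemmas.
Local Open Scope nat_scope.

Lemma take_drop3 (T : Type) p e (w : seq T) :
  w = take p w ++ take e (drop p w) ++ drop (p + e) w.
Proof. by rewrite addnC -drop_drop !cat_take_drop. Qed.

Lemma mem_mask_iota a N (m : bitseq) j : size m = N -> j < N ->
  (a + j \in mask m (iota a N)) = nth false m j.
Proof.
elim: m a N j => [|x m IH] a N j /= <- // hj.
case: j hj => [|j] hj.
  rewrite addn0; case: x => /=; first by rewrite mem_head.
  by apply/negbTE/negP => /mem_mask; rewrite mem_iota; lia.
rewrite -addSnnS [RHS]/= -(IH a.+1 (size m) j) //; case: x => //=.
by rewrite in_cons (_ : (a.+1 + j == a) = false) //; apply/eqP; lia.
Qed.

Lemma nth_blocks p e q j : j < p + e + q ->
  nth false (nseq p false ++ nseq e true ++ nseq q false) j = (p <= j < p + e).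
Proof.
move=> hj; rewrite nth_cat size_nseq; case: ifP => h1.
  by rewrite nth_nseq if_same; lia.
by rewrite nth_cat size_nseq; case: ifP => h2; rewrite nth_nseq; case: ifP; lia.
Qed.

(* When nothing is selected, the block is normalised to start at 0. *)
Lemma mask_iota_block a b e N (m : bitseq) : size m = N ->
  mask m (iota a N) = iota b e ->
  let p := if e == 0 then 0 else b - a in
  [/\ p + e <= N, (e == 0) || (a <= b)
    & m = nseq p false ++ nseq e true ++ nseq (N - p - e) false].
Proof.
move=> sm h p.
have key j : j < N -> nth false m j = (a + j \in iota b e).
  by move=> hj; rewrite -h mem_mask_iota.
have [hpe hab hnth] : [/\ p + e <= N, (e == 0) || (a <= b)
    & forall j, j < N -> nth false m j = (p <= j < p + e)].
  case: (posnP e) => [e0|ep].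
    by subst e; split=> // j hj; rewrite key.
  have hb : b \in iota a N by apply: (@mem_mask _ _ m); rewrite h mem_iota; lia.
  have he : b + e.-1 \in iota a N by apply: (@mem_mask _ _ m); rewrite h mem_iota; lia.
  move: hb he; rewrite !mem_iota => hb he.
  have pe : p = b - a by rewrite /p; case: eqP => //; lia.
  split; [lia | apply/orP; right; lia | move=> j hj; rewrite key // mem_iota pe; lia].
split=> //; apply: (@eq_from_nth _ false); first by rewrite !size_cat !size_nseq; lia.
by move=> j hj; rewrite nth_blocks; [apply: hnth | ]; lia.
Qed.

Lemma mask_blocks (T : Type) p e q (B1 B2 B3 : seq T) : size B1 = p -> size B2 = e ->
  mask (nseq p false ++ nseq e true ++ nseq q false) (B1 ++ B2 ++ B3) = B2.
Proof.
move=> s1 s2; rewrite mask_cat ?size_nseq // mask_cat ?size_nseq //.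
by rewrite !mask_false mask_true ?s2 // cats0.
Qed.

Lemma mask_blocksC (T : Type) p e q (B1 B2 B3 : seq T) : size B1 = p -> size B2 = e ->
  size B3 <= q ->
  mask (nseq p true ++ nseq e false ++ nseq q true) (B1 ++ B2 ++ B3) = B1 ++ B3.
Proof.
move=> s1 s2 s3; rewrite mask_cat ?size_nseq // mask_cat ?size_nseq //.
by rewrite !mask_false !mask_true ?s1.
Qed.

Lemma not_uniq_mapP (T1 T2 : eqType) (f : T1 -> T2) (s : seq T1) :
  ~~ uniq (map f s) -> exists x y, [/\ x \in s, y \in rem x s & f x = f y].
Proof.
elim: s => [|z s IH] //=; rewrite negb_and negbK => /orP[/mapP[y ys fy]|].
  by exists z, y; split => //; [exact: mem_head | rewrite /= eqxx].
move=> /IH[x [y [xs ys fxy]]]; exists x, y; split => //; first by rewrite in_cons xs orbT.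
by rewrite /=; case: eqP => _; [exact: mem_rem ys | rewrite in_cons ys orbT].
Qed.

Lemma ex_max_bounded (P : nat -> Prop) N : P 0 -> (forall k, P k -> k <= N) ->
  exists k, P k /\ forall k', P k' -> k' <= k.
Proof.
elim: N => [|N IH] P0 hb; first by exists 0; split => // k' /hb.
case: (classic (P N.+1)) => [h|h]; first by exists N.+1; split.
apply: IH => // k pk; have := hb k pk; rewrite leq_eqVlt => /orP[/eqP e|] //.
by rewrite e in pk.
Qed.

End SeqLemmas.

Section QuotientDimension.
Variables (K : fieldType) (T : Type) (r : nat).
Variables U W : ('I_r -> T -> K) -> Prop.
Hypothesis WZ : forall a x, W x -> W (vscale a x).

Definition qfree k (b : 'I_k -> 'I_r -> T -> K) :=
  (forall j, U (b j)) /\ (forall c, W (lcomb c b) -> forall j, c j = 0).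

Lemma lcomb_closed (P : (T -> K) -> Prop) k (c : 'I_k -> K) (f : 'I_k -> T -> K) :
  P (@fzero K T) -> (forall x y, P x -> P y -> P (fadd x y)) ->
  (forall a x, P x -> P (fscale a x)) ->
  (forall j, P (f j)) -> P (fun t => \sum_(j < k) c j * f j t).
Proof.
elim: k c f => [|k IH] c f P0 PD PZ Pf.
  have -> : (fun t => \sum_(j < 0) c j * f j t) = @fzero K T; last exact: P0.
  by apply: functional_extensionality => t; rewrite big_ord0.
pose c' j := c (widen_ord (leqnSn k) j); pose f' j := f (widen_ord (leqnSn k) j).
have -> : (fun t => \sum_(j < k.+1) c j * f j t) =
          fadd (fun t => \sum_(j < k) c' j * f' j t) (fscale (c ord_max) (f ord_max)).
  by apply: functional_extensionality => t; rewrite big_ord_recr.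
by apply: (PD); [apply: IH => // j; exact: Pf | exact: PZ].
Qed.

Lemma qdim_of_maximal k (b : 'I_k -> 'I_r -> T -> K) :
  qfree b -> ~ (exists b' : 'I_k.+1 -> 'I_r -> T -> K, qfree b') -> qdim U W k.
Proof.
move=> [Ub indb] nmax; exists b; split => //; split => // u Uu.
pose b' : 'I_k.+1 -> 'I_r -> T -> K := fun j => if insub (val j) is Some j' then b j' else u.
have bw j : b' (widen_ord (leqnSn k) j) = b j.
  rewrite /b'; case: insubP => [j' _ ej|] /=; last by rewrite ltn_ord.
  by congr b; apply: val_inj.
have bm : b' ord_max = u by rewrite /b'; case: insubP => [j' /= |//]; rewrite ltnn.
have [c [Wc [j nz]]] : exists c, W (lcomb c b') /\ exists j, c j <> 0.
  apply: NNPP => h; apply: nmax; exists b'; split.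
    by move=> j; rewrite /b'; case: insubP.
  move=> c Wc j; apply: NNPP => nz; apply: h; exists c; split => //; by exists j.
pose c' j := c (widen_ord (leqnSn k) j).
have split_last : lcomb c b' = vadd (lcomb c' b) (vscale (c ord_max) u).
  apply: functional_extensionality => i; apply: functional_extensionality => t.
  rewrite /lcomb /vadd /fadd /vscale /fscale big_ord_recr bm /=; congr (_ + _).
  by apply: eq_bigr => l _; rewrite bw.
(* The relation must involve u since b is free; solving it for u expresses u modulo W. *)
case: (eqVneq (c ord_max) 0) => [cm|cm].
  exfalso; apply: nz.
  have c'0 : forall l, c' l = 0.
    apply: indb; rewrite (_ : lcomb c' b = lcomb c b') //.
    rewrite split_last; apply: functional_extensionality => i.
    apply: functional_extensionality => t.
    by rewrite /vadd /fadd /vscale /fscale cm mul0r addr0.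
  case: (unliftP ord_max j) => [j'|] ->; last exact: cm.
  by rewrite -(c'0 j'); congr c; apply: val_inj; rewrite /= /bump leqNgt ltn_ord.
exists (fun j => - c' j / c ord_max).
have -> : vsub u (lcomb (fun j => - c' j / c ord_max) b) = vscale (c ord_max)^-1 (lcomb c b').
  rewrite split_last; apply: functional_extensionality => i; apply: functional_extensionality => t.
  rewrite /vsub /fsub /vadd /fadd /vscale /fscale /lcomb mulrDr mulrA mulVf // mul1r addrC.
  rewrite mulr_sumr -sumrN; congr (_ + _); apply: eq_bigr => l _; rewrite mulrA.
  by field.
exact: WZ.
Qed.

Lemma qdim_of_bounded N : (forall k b, @qfree k b -> k <= N)%N -> exists k, qdim U W k.
Proof.
move=> hb; pose P k := exists b : 'I_k -> 'I_r -> T -> K, qfree b.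
have P0 : P 0%N by exists (fun _ => @vzero K T r); split => [[]|c _ []].
have [k [[b fb] kmax]] := @ex_max_bounded P N P0 (fun k '(ex_intro b fb) => hb k b fb).
by exists k; apply: qdim_of_maximal fb _ => /kmax; rewrite ltnn.
Qed.

End QuotientDimension.

Section Monomials.
Variables (K : fieldType) (n : nat).

Definition mulmon (u : pmon n) (f : Ppoly K n) : Ppoly K n := foldr (@xmul K n) f u.

Fixpoint mdiv (u t : pmon n) : option (pmon n) :=
  if u is v :: u' then (if v \in t then mdiv u' (rem v t) else None) else Some t.

Lemma lek_trans : transitive (@lek n).
Proof. by move=> b a c; rewrite /lek; lia. Qed.

Lemma lek_anti : antisymmetric (@lek n).
Proof.
move=> [a1 a2] [b1 b2]; rewrite /lek /= => h.
have e : a2 = b2 by lia.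
by subst; congr pair; apply/val_inj => /=; lia.
Qed.

Lemma lek_total : total (@lek n).
Proof. by move=> [a1 a2] [b1 b2]; rewrite /lek /=; lia. Qed.

Lemma sort_lek_eq (u s : pmon n) : sorted (@lek n) s -> perm_eq u s -> sort (@lek n) u = s.
Proof.
move=> ss pus; apply: (sorted_eq lek_trans lek_anti) => //; first exact: (sort_sorted lek_total).
by rewrite perm_sort.
Qed.

Lemma validP_subseq (s t : pmon n) : subseq s t -> validP t -> validP s.
Proof.
move=> ss /andP[st alt]; apply/andP; split; first exact: (subseq_sorted lek_trans ss st).
by apply/allP=> x /(mem_subseq ss) xt; exact: (allP alt).
Qed.

Lemma xmul0 v : xmul v (@fzero K (pmon n)) = @fzero K (pmon n).
Proof. by apply: functional_extensionality => t; rewrite /xmul /fzero; case: ifP. Qed.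

Lemma mulmon_cat u1 u2 f : mulmon (u1 ++ u2) f = mulmon u1 (mulmon u2 f).
Proof. by rewrite /mulmon foldr_cat. Qed.

Lemma mulmon_rcons u v f : mulmon (rcons u v) f = mulmon u (xmul v f).
Proof. by rewrite /mulmon foldr_rcons. Qed.

Lemma mulmonE u f t : validP t -> mulmon u f t = if mdiv u t is Some s then f s else 0.
Proof.
elim: u t => [|v u IH] t vt //=; rewrite /xmul vt /=; case: ifP => vin //.
by apply: IH; apply: validP_subseq vt; exact: rem_subseq.
Qed.

Lemma mulmon_invalid u f t : ~~ validP t -> u != [::] -> mulmon u f t = 0.
Proof. by case: u => [|v u] // vt _; rewrite /= /xmul (negbTE vt). Qed.

Lemma mulmonD u f g : mulmon u (fadd f g) = fadd (mulmon u f) (mulmon u g).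
Proof.
elim: u => [|v u IH] //=; apply: functional_extensionality => t.
by rewrite IH /xmul /fadd; case: ifP => //; rewrite addr0.
Qed.

Lemma mulmonZ u c f : mulmon u (fscale c f) = fscale c (mulmon u f).
Proof.
elim: u => [|v u IH] //=; apply: functional_extensionality => t.
by rewrite IH /xmul /fscale; case: ifP => //; rewrite mulr0.
Qed.

Lemma mulmon0 u : mulmon u (@fzero K (pmon n)) = @fzero K (pmon n).
Proof. by elim: u => [|v u IH] //=; rewrite IH xmul0. Qed.

Lemma mdiv_uniq u (t : pmon n) : uniq t ->
  mdiv u t = if uniq u && all (mem t) u then Some [seq x <- t | x \notin u] else None.
Proof.
elim: u t => [|v u IH] t ut /=.
  by rewrite (@eq_filter _ _ predT) ?filter_predT.
case vt: (v \in t); last by rewrite andbF.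
rewrite IH ?rem_uniq //.
have -> : all (mem (rem v t)) u = (v \notin u) && all (mem t) u.
  rewrite -has_pred1 -all_predC -all_predI; apply: eq_all => x /=.
  by rewrite (mem_rem_uniq v ut) !inE.
case: (v \notin u); case: (uniq u); case: (all (mem t) u) => //=.
congr Some; rewrite (rem_filter _ ut) -filter_predI; apply: eq_filter => x /=.
by rewrite in_cons negb_or andbC.
Qed.

Lemma mdiv_nilP u (t : pmon n) : mdiv u t = Some [::] <-> perm_eq t u.
Proof.
elim: u t => [|v u IH] t /=.
  by split=> [[->]//|/perm_size/eqP]; rewrite size_eq0 => /eqP->.
case vt: (v \in t).
  rewrite IH; split=> h.
    by apply: perm_trans (perm_to_rem vt) _; rewrite perm_cons.
  by rewrite -(perm_cons v); apply: perm_trans h; rewrite perm_sym; exact: perm_to_rem.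
by split=> // h; rewrite (perm_mem h) mem_head in vt.
Qed.

End Monomials.
Arguments lek_trans {n}.
Arguments lek_anti {n}.

Section Placement.
Variables (K : fieldType) (n : nat).

(* [place o w] is sigma^o iota of the word w: its letters in columns o+1, o+2, ... *)
Definition place (o : nat) (w : word n) : pmon n := zip w (iota o.+1 (size w)).
Definition placed (o : nat) (t : pmon n) : bool := t == place o (map fst t).

Lemma size_place o w : size (place o w) = size w.
Proof. by rewrite /place size_zip size_iota minnn. Qed.

Lemma map_fst_place o w : map fst (place o w) = w.
Proof. by rewrite /place -/(unzip1 _) unzip1_zip // size_iota. Qed.

Lemma map_snd_place o w : map snd (place o w) = iota o.+1 (size w).
Proof. by rewrite /place -/(unzip2 _) unzip2_zip // size_iota. Qed.

Lemma place_cat o w1 w2 : place o (w1 ++ w2) = place o w1 ++ place (o + size w1) w2.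
Proof. by rewrite /place size_cat iotaD zip_cat ?size_iota // addSn. Qed.

Lemma place_split3 o p e w : (p + e <= size w)%N ->
  place o w = place o (take p w) ++ place (o + p) (take e (drop p w))
              ++ place (o + p + e) (drop (p + e) w).
Proof.
move=> h; rewrite {1}(take_drop3 p e w) !place_cat size_take size_take size_drop.
have -> : (if (p < size w)%N then p else size w) = p by case: ltnP; lia.
by have -> : (if (e < size w - p)%N then e else (size w - p)%N) = e by case: ltnP; lia.
Qed.

Lemma placedP o t : reflect (exists w, t = place o w) (placed o t).
Proof.
apply: (iffP eqP) => [h|[w ->]]; first by exists (map fst t).
by rewrite map_fst_place.
Qed.

Lemma placed_place o w : placed o (place o w).
Proof. by apply/placedP; exists w. Qed.

Lemma path_place o x w : path (@lek n) (x, o) (place o w).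
Proof. by elim: w o x => [|y w IH] o x //=; rewrite IH andbT /lek /=; lia. Qed.

Lemma cols_place o w : all (fun p : pvar n => (o < p.2 <= o + size w)%N) (place o w).
Proof.
apply/allP => -[a b] pin; have : b \in map snd (place o w) by apply/mapP; exists (a, b).
by rewrite map_snd_place mem_iota /=; lia.
Qed.

Lemma valid_place o w : validP (place o w).
Proof.
apply/andP; split; first by case: w => //= y w; exact: path_place.
by apply: sub_all (cols_place o w) => p /andP[]; lia.
Qed.

Lemma uniq_cols_place o w : uniq (map snd (place o w)).
Proof. by rewrite map_snd_place iota_uniq. Qed.

Lemma uniq_place o w : uniq (place o w).
Proof. exact: map_uniq (uniq_cols_place o w). Qed.

Definition siota (o : nat) (x : Fpoly K n) : Ppoly K n := iter o (@sigmaP K n) (iotaF x).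

Lemma siotaE o x t : siota o x t = if placed o t then x (map fst t) else 0.
Proof.
elim: o t => [|o IH] t //; rewrite /siota iterS -/(siota o x) /sigmaP IH.
have shiftD w o' : [seq (p.1, p.2.-1) | p <- place o'.+1 w] = place o' w.
  by elim: w o' => [|c w IHw] o' //=; rewrite IHw.
have shiftS w o' : [seq (p.1, p.2.+1) | p <- place o' w] = place o'.+1 w.
  by elim: w o' => [|c w IHw] o' //=; rewrite IHw.
case h: (placed o.+1 t).
  move/placedP: h => [w ->].
  have -> : all (fun p : pvar n => 1 < p.2)%N (place o.+1 w).
    by apply: sub_all (cols_place o.+1 w) => -[a b] /=; lia.
  by rewrite valid_place shiftD placed_place !map_fst_place.
case: ifP => // /andP[_ gt1]; case: ifP => // /placedP[w e].
suff : placed o.+1 t by rewrite h.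
apply/placedP; exists w; rewrite -shiftS -e -map_comp -[LHS]map_id.
by apply/eq_in_map => -[a b] /(allP gt1) /=; case: b.
Qed.

Lemma siota_place o x w : siota o x (place o w) = x w.
Proof. by rewrite siotaE placed_place map_fst_place. Qed.

Lemma siotaD o x y : siota o (fadd x y) = fadd (siota o x) (siota o y).
Proof.
apply: functional_extensionality => t.
by rewrite /fadd !siotaE; case: ifP => //; rewrite addr0. Qed.

Lemma siotaZ o c x : siota o (fscale c x) = fscale c (siota o x).
Proof.
apply: functional_extensionality => t.
by rewrite /fscale !siotaE; case: ifP => //; rewrite mulr0. Qed.

Lemma siota0 o : siota o (@fzero K (word n)) = @fzero K (pmon n).
Proof. by apply: functional_extensionality => t; rewrite /fzero !siotaE; case: ifP. Qed.

Lemma siota_supp o x t : siota o x t != 0 -> exists2 w, t = place o w & x w != 0.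
Proof.
rewrite siotaE; case: ifP => [/placedP[w ->] | _]; last by rewrite eqxx.
by rewrite map_fst_place => h; exists w.
Qed.

Lemma siota_poly o x : is_Fpoly x -> is_Ppoly (siota o x).
Proof.
move=> [s hs]; exists (map (place o) s) => t /siota_supp [w -> xw].
rewrite valid_place andbT; apply/mapP; exists w => //.
by case/andP: (hs w xw).
Qed.

End Placement.
Arguments siota0 {K n} o.

Section WordMonomials.
Variables (K : fieldType) (n : nat).

Definition wmono (a : word n) : Fpoly K n := fun v => (v == a)%:R.

Lemma wmono_poly a : is_Fpoly (wmono a).
Proof. by exists [:: a] => t; rewrite /wmono inE; case: (t == a) => //=; rewrite eqxx. Qed.

Lemma mulF_wmonoL a (g : Fpoly K n) w :
  mulF (wmono a) g w = if take (size a) w == a then g (drop (size a) w) else 0.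
Proof.
rewrite /mulF /wmono.
have sz (i : 'I_(size w).+1) : take i w = a -> i = size a :> nat.
  by move=> ti; rewrite -ti size_take; have := ltn_ord i; case: ifP; lia.
case: (leqP (size a) (size w)) => h.
  have h' : (size a < (size w).+1)%N by lia.
  rewrite (bigD1 (Ordinal h')) //= big1 ?addr0.
    by case: eqP => _; rewrite ?mul1r ?mul0r.
  move=> i hi; case: eqP => ti; last by rewrite mul0r.
  by have e := sz i ti; move: hi; rewrite (_ : i = Ordinal h') ?eqxx //; exact/val_inj.
transitivity (0 : K).
  apply: big1 => i _; case: eqP => ti; last by rewrite mul0r.
  by have := sz i ti; have := ltn_ord i; lia.
by rewrite take_oversize ?(ltnW h) //; case: eqP => // ew; move: h; rewrite -ew ltnn.
Qed.

Lemma mulF_wmonoR (f : Fpoly K n) b w :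
  mulF f (wmono b) w =
  if drop (size w - size b) w == b then f (take (size w - size b) w) else 0.
Proof.
rewrite /mulF /wmono.
have sz (i : 'I_(size w).+1) : drop i w = b -> (size w - i = size b)%N.
  by move=> ti; rewrite -ti size_drop.
case: (leqP (size b) (size w)) => h.
  have h' : (size w - size b < (size w).+1)%N by lia.
  rewrite (bigD1 (Ordinal h')) //= big1 ?addr0.
    by case: eqP => _; rewrite ?mulr1 ?mulr0.
  move=> i hi; case: eqP => ti; last by rewrite mulr0.
  have e := sz i ti; move: hi; rewrite (_ : i = Ordinal h') ?eqxx //; apply/val_inj => /=.
  by have := ltn_ord i; lia.
transitivity (0 : K).
  apply: big1 => i _; case: eqP => ti; last by rewrite mulr0.
  by have := sz i ti; have := ltn_ord i; lia.
have -> : (size w - size b = 0)%N by lia.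
by rewrite drop0; case: eqP => // ew; move: h; rewrite -ew ltnn.
Qed.

Lemma mulF_wmono_nil (g : Fpoly K n) : mulF (wmono [::]) g = g.
Proof. by apply: functional_extensionality => w; rewrite mulF_wmonoL /= take0 drop0 eqxx. Qed.

End WordMonomials.
Arguments wmono {K n} a.
Arguments wmono_poly {K n} a.

Section FixedDegree.
Variables (K : fieldType) (n d : nat).
Local Open Scope nat_scope.

Definition placed_part (o : nat) (F : Ppoly K n) : Ppoly K n :=
  fun t => if placed o t && (size t + o == d) then F t else 0%R.
Definition placed_coef (o : nat) (F : Ppoly K n) : Fpoly K n :=
  fun w => if size w + o == d then F (place o w) else 0%R.

Lemma placed_part_coef o F : placed_part o F = siota o (placed_coef o F).
Proof.
apply: functional_extensionality => t; rewrite /placed_part siotaE /placed_coef.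
case h: (placed o t) => //=; move/placedP: h => [w ->].
by rewrite size_place map_fst_place.
Qed.

Lemma placed_coef_part o F : placed_coef o (placed_part o F) = placed_coef o F.
Proof.
apply: functional_extensionality => w; rewrite /placed_coef /placed_part placed_place size_place.
by case: ifP => // ->.
Qed.

Lemma placed_partD o f g :
  placed_part o (fadd f g) = fadd (placed_part o f) (placed_part o g).
Proof.
apply: functional_extensionality => t.
by rewrite /placed_part /fadd; case: ifP => //; rewrite addr0.
Qed.

Lemma placed_partZ o c f : placed_part o (fscale c f) = fscale c (placed_part o f).
Proof.
apply: functional_extensionality => t.
by rewrite /placed_part /fscale; case: ifP => //; rewrite mulr0.
Qed.

Lemma placed_part0 o : placed_part o (@fzero K (pmon n)) = @fzero K (pmon n).
Proof. by apply: functional_extensionality => t; rewrite /placed_part /fzero; case: ifP. Qed.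

(* If a sub-monomial of a placed monomial is itself placed, its columns form a
   contiguous block. *)
Lemma placed_filter o k w (P : pred (pvar n)) :
  placed k [seq x <- place o w | P x] ->
  let e := count P (place o w) in let p := if e == 0 then 0 else k - o in
  [/\ p + e <= size w, (e == 0) || (o <= k),
      [seq x <- place o w | P x] = place (o + p) (take e (drop p w)) &
      [seq x <- place o w | ~~ P x] = place o (take p w) ++ place (o + p + e) (drop (p + e) w)].
Proof.
move=> /eqP lp e p.
have hm : mask (map P (place o w)) (iota o.+1 (size w)) = iota k.+1 e.
  have := congr1 (map snd) lp; rewrite map_snd_place size_map size_filter => <-.
  by rewrite filter_mask map_mask map_snd_place.
have szm : size (map P (place o w)) = size w by rewrite size_map size_place.
have [] := mask_iota_block szm hm; rewrite subSS -/p => hpe hk hm2.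
have ht := place_split3 o hpe.
have s1 : size (take p w) = p by rewrite size_takel //; lia.
have s2 : size (take e (drop p w)) = e by rewrite size_takel // size_drop; lia.
split => //; first by rewrite filter_mask hm2 [X in mask _ X]ht mask_blocks // size_place.
rewrite filter_mask -[map _ _]/(map (negb \o P) _) map_comp hm2 !map_cat !map_nseq /=.
by rewrite [X in mask _ X]ht mask_blocksC // ?size_place // size_drop; lia.
Qed.

(* [frame o k u]: the monomial u, together with a placed block in the columns
   k+1, ..., k + gap o u, fills exactly the columns o+1, ..., d; the letters of
   u before and after the block are [pre_word] and [suf_word]. *)
Definition gap (o : nat) (u : pmon n) := d - o - size u.
Definition pre_len o k u := if gap o u == 0 then 0 else k - o.
Definition mon_word (u : pmon n) := map fst (sort (@lek n) u).
Definition pre_word o k u := take (pre_len o k u) (mon_word u).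
Definition suf_word o k u := drop (pre_len o k u) (mon_word u).
Definition frame o k (u : pmon n) : bool :=
  [&& uniq u, o + size u <= d, (gap o u == 0) || ((o <= k) && (k - o <= size u)) &
      sort (@lek n) u == place o (pre_word o k u)
                         ++ place (o + pre_len o k u + gap o u) (suf_word o k u)].

Lemma size_mon_word (u : pmon n) : size (mon_word u) = size u.
Proof. by rewrite /mon_word size_map size_sort. Qed.

Lemma frame_of_cover o k (u : pmon n) (w : word n) : size w + o = d ->
  uniq u -> all (mem (place o w)) u -> placed k [seq x <- place o w | x \notin u] ->
  [/\ frame o k u, take (pre_len o k u) w = pre_word o k u,
      drop (pre_len o k u + gap o u) w = suf_word o k u &
      [seq x <- place o w | x \notin u]
        = place (o + pre_len o k u) (take (gap o u) (drop (pre_len o k u) w))].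
Proof.
move=> hw uu sub lp.
have pus : perm_eq u [seq x <- place o w | x \in u].
  apply: uniq_perm => //; first exact: filter_uniq (uniq_place o w).
  by move=> x; rewrite mem_filter; case xu: (x \in u) => //=; exact/esym/(allP sub).
have he : gap o u = count (fun x => x \notin u) (place o w).
  have := count_predC (mem u) (place o w); rewrite size_place -size_filter -(perm_size pus).
  by move=> H; rewrite /gap -hw addnK -H addKn.
have [] := placed_filter lp; rewrite -he -/(pre_len o k u) => hpe hk hin hout.
have hsort : sort (@lek n) u = [seq x <- place o w | x \in u].
  apply: sort_lek_eq => //; apply: sorted_filter; first exact: lek_trans.
  by case/andP: (valid_place o w).
rewrite (eq_filter (a2 := fun x => x \in u)) in hout; last by move=> x; rewrite negbK.
have hW : mon_word u = take (pre_len o k u) w ++ drop (pre_len o k u + gap o u) w.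
  by rewrite /mon_word hsort hout map_cat !map_fst_place.
have ha : pre_word o k u = take (pre_len o k u) w.
  by rewrite /pre_word hW take_size_cat ?size_takel //; lia.
have hb : suf_word o k u = drop (pre_len o k u + gap o u) w.
  by rewrite /suf_word hW drop_size_cat ?size_takel //; lia.
split => //; rewrite /frame uu hsort hout ha hb eqxx andbT /=.
have hsz : size u <= size w.
  by rewrite (perm_size pus) size_filter -(size_place o w) count_size.
have hg : gap o u = size w - size u by rewrite /gap -hw addnK.
apply/andP; split; first lia.
by move: hk hpe; rewrite /pre_len hg; case: eqVneq => [->|ne] //=; lia.
Qed.

Lemma frame_sizes o k (u : pmon n) (w : word n) : size w + o = d -> frame o k u ->
  [/\ size (pre_word o k u) = pre_len o k u,
      size w - size (suf_word o k u) = pre_len o k u + gap o u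
    & pre_len o k u + gap o u <= size w].
Proof.
move=> hw /and4P[_ hud hk _].
have hp : pre_len o k u <= size u.
  by move: hk; rewrite /pre_len; case: (eqVneq (gap o u) 0) => //= _; lia.
have hg : gap o u + size u = size w by rewrite /gap; lia.
rewrite /pre_word /suf_word size_take size_drop size_mon_word.
by split; try lia; case: ltnP; lia.
Qed.

Lemma cover_of_frame o k (u : pmon n) (w : word n) : size w + o = d -> frame o k u ->
  take (pre_len o k u) w = pre_word o k u -> drop (pre_len o k u + gap o u) w = suf_word o k u ->
  [/\ uniq u, all (mem (place o w)) u,
      [seq x <- place o w | x \notin u]
        = place (o + pre_len o k u) (take (gap o u) (drop (pre_len o k u) w)) &
      placed k (place (o + pre_len o k u) (take (gap o u) (drop (pre_len o k u) w)))].
Proof.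
move=> hw fr ha hb; have [_ _ hpe] := frame_sizes hw fr.
case/and4P: fr => uu _ hk /eqP hs.
have ht := place_split3 o hpe; rewrite ha hb in ht.
have inu x : (x \in u) = (x \in place o (pre_word o k u))
    || (x \in place (o + pre_len o k u + gap o u) (suf_word o k u)).
  by rewrite -(perm_mem (permEl (perm_sort (@lek n) u))) hs mem_cat.
have := uniq_place o w; rewrite {1}ht !cat_uniq => /and5P[_ hn1 _ hn2 _].
split => //.
- apply/allP => x xu; change (x \in place o w); rewrite ht !mem_cat; move: xu; rewrite inu.
  by case/orP => ->; rewrite ?orbT.
- rewrite ht !filter_cat.
  rewrite (@eq_in_filter _ _ pred0 (place o _)); last by move=> x xb /=; rewrite inu xb.
  rewrite (@eq_in_filter _ _ pred0 (place (o + _ + _) _)); last first.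
    by move=> x xb /=; rewrite inu xb orbT.
  rewrite (@eq_in_filter _ _ predT (place (o + pre_len o k u) _)).
    by rewrite !filter_pred0 filter_predT cats0.
  move=> x xb /=; rewrite inu; apply/negP => /orP[h|h].
    by move/hasP: hn1; apply; exists x => //; rewrite mem_cat xb.
  by move/hasP: hn2; apply; exists x.
- move: hk; rewrite /pre_len; case: (eqVneq (gap o u) 0) => [->|_] /=; first by rewrite take0.
  by move=> /andP[ok _]; rewrite subnKC //; exact: placed_place.
Qed.

Lemma frame_mulF o k (u : pmon n) (g : Fpoly K n) (w : word n) :
  size w + o = d -> frame o k u ->
  mulF (mulF (wmono (pre_word o k u)) g) (wmono (suf_word o k u)) w =
  if (take (pre_len o k u) w == pre_word o k u)
     && (drop (pre_len o k u + gap o u) w == suf_word o k u)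
  then g (take (gap o u) (drop (pre_len o k u) w)) else 0%R.
Proof.
move=> hw fr; have [sa sb _] := frame_sizes hw fr.
rewrite mulF_wmonoR mulF_wmonoL sb sa take_takel ?leq_addr //.
have -> : drop (pre_len o k u) (take (pre_len o k u + gap o u) w)
        = take (gap o u) (drop (pre_len o k u) w) by rewrite take_drop addnC.
by rewrite andbC; case: eqP => //; case: eqP.
Qed.

(* The placed coefficients of u * sigma^k iota(g) are those of the word product
   a g b, where a and b are the words of u before and after the block. *)
Lemma placed_coef_mulmon_siota o k (u : pmon n) (g : Fpoly K n) (w : word n) :
  placed_coef o (placed_part o (mulmon u (siota k g))) w =
  if (size w + o == d) && frame o k u
  then mulF (mulF (wmono (pre_word o k u)) g) (wmono (suf_word o k u)) w else 0%R.
Proof.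
rewrite /placed_coef /placed_part placed_place size_place; case: eqP => //= hw.
rewrite mulmonE ?valid_place // mdiv_uniq ?uniq_place //.
case fr: (frame o k u); last first.
  case: ifP => //= /andP[uu sub]; rewrite siotaE; case: ifP => // hl.
  by have [fr' _ _ _] := frame_of_cover hw uu sub hl; rewrite fr' in fr.
rewrite frame_mulF //; case: ifP => /= [/andP[uu sub]|hu].
  rewrite siotaE; case: ifP => hl.
    by have [_ -> -> ->] := frame_of_cover hw uu sub hl; rewrite !eqxx map_fst_place.
  case: eqP => // ta; case: eqP => // db.
  by have [_ _ hs lp'] := cover_of_frame hw fr ta db; rewrite hs lp' in hl.
case: eqP => // ta; case: eqP => // db.
by have [uu sub _ _] := cover_of_frame hw fr ta db; rewrite uu sub in hu.
Qed.

Lemma placed_part_Qgen o u i k j :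
  placed_part o (mulmon u (xmul (i, j) (xmul (k, j) (mono K [::])))) = @fzero K (pmon n).
Proof.
apply: functional_extensionality => t; rewrite /placed_part /fzero.
case: ifP => // /andP[/placedP[w ->] _].
rewrite -[xmul _ _]/(mulmon [:: (i, j); (k, j)] (mono K [::])) -mulmon_cat mulmonE ?valid_place //.
case E: (mdiv _ _) => [s|] //; rewrite /mono; case: eqP => [s0|] //; subst s.
move/mdiv_nilP: E => pe; have := uniq_cols_place o w.
by rewrite (perm_uniq (perm_map snd pe)) map_cat cat_uniq /= inE eqxx !andbF.
Qed.



Section IdealJ.
Local Open Scope ring_scope.
Variable I : Fpoly K n -> Prop.
Hypothesis HI : graded_twosided_ideal I.

Definition Ihom o (x : Fpoly K n) := I x /\ forall w, x w != 0 -> (size w + o)%N = d.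

Lemma Ihom0 o : Ihom o (@fzero K (word n)).
Proof. by split; [exact: gi_zero HI | move=> w; rewrite /fzero eqxx]. Qed.

Lemma IhomD o x y : Ihom o x -> Ihom o y -> Ihom o (fadd x y).
Proof.
move=> [Ix hx] [Iy hy]; split; first exact: gi_add.
by move=> w; rewrite /fadd; case: (eqVneq (x w) 0) => [->|/hx //]; rewrite add0r; exact: hy.
Qed.

Lemma IhomZ o c x : Ihom o x -> Ihom o (fscale c x).
Proof.
move=> [Ix hx]; split; first exact: gi_scale.
by move=> w; rewrite /fscale; case: (eqVneq (x w) 0) => [->|/hx //]; rewrite mulr0 eqxx.
Qed.

Lemma placed_part_Igen o u k g : I g ->
  exists x, Ihom o x /\ placed_part o (mulmon u (siota k g)) = siota o x.
Proof.
move=> Ig; exists (placed_coef o (placed_part o (mulmon u (siota k g)))).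
split; last by rewrite placed_coef_part placed_part_coef.
case fr: (frame o k u); last first.
  have -> : placed_coef o (placed_part o (mulmon u (siota k g))) = @fzero K (word n).
    by apply: functional_extensionality => w; rewrite placed_coef_mulmon_siota fr andbF.
  exact: Ihom0.
have od : (o <= d)%N by case/and4P: fr => _ h _ _; lia.
have -> : placed_coef o (placed_part o (mulmon u (siota k g))) =
    hpartF (d - o) (mulF (mulF (wmono (pre_word o k u)) g) (wmono (suf_word o k u))).
  apply: functional_extensionality => w; rewrite placed_coef_mulmon_siota fr andbT /hpartF.
  by have -> : (size w + o == d)%N = (size w == d - o)%N by apply/eqP/eqP; lia.
split; first exact: gi_graded HI _ _ (gi_rmul HI (wmono_poly _) (gi_lmul HI (wmono_poly _) Ig)).
by move=> w; rewrite /hpartF; case: (size w =P (d - o)%N) => [h _|]; [lia | rewrite eqxx].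
Qed.

Lemma placed_part_J f : Jpre I f ->
  forall o u, exists x, Ihom o x /\ placed_part o (mulmon u f) = siota o x.
Proof.
elim => {f}.
- move=> f [[i [k [j [_ ->]]]] | [k [g [Ig ->]]]] o u; last exact: placed_part_Igen.
  by exists (@fzero K (word n)); split; [exact: Ihom0 | rewrite placed_part_Qgen siota0].
- move=> o u; exists (@fzero K (word n)); rewrite mulmon0 placed_part0 siota0.
  by split => //; exact: Ihom0.
- move=> f g _ IHf _ IHg o u.
  have [x [hx ex]] := IHf o u; have [y [hy ey]] := IHg o u.
  exists (fadd x y); rewrite mulmonD placed_partD ex ey siotaD.
  by split => //; exact: IhomD.
- move=> c f _ IH o u; have [x [hx ex]] := IH o u.
  exists (fscale c x); rewrite mulmonZ placed_partZ ex siotaZ.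
  by split => //; exact: IhomZ.
- by move=> v f _ _ IH o u; rewrite -mulmon_rcons; exact: IH.
Qed.

Lemma Jpre_sub x y : Jpre I x -> Jpre I y -> Jpre I (fsub x y).
Proof.
move=> Jx Jy; have -> : fsub x y = fadd x (fscale (-1) y).
  by apply: functional_extensionality => t; rewrite /fsub /fadd /fscale mulN1r.
exact: ig_add Jx (ig_scale _ Jy).
Qed.

Lemma Jpre_siota o x : I x -> Jpre I (siota o x).
Proof. by move=> Ix; apply: ig_base; right; exists o, x. Qed.

Lemma Jpre_placed_part o F : Jpre I F -> Jpre I (placed_part o F).
Proof.
move=> JF; have [x [[Ix _] e]] := placed_part_J JF o [::].
by rewrite -[mulmon _ _]/F in e; rewrite e; exact: Jpre_siota.
Qed.

Definition hpartP (e : nat) (f : Ppoly K n) : Ppoly K n :=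
  fun t => if size t == e then f t else 0.

Lemma hpartPD e f g : hpartP e (fadd f g) = fadd (hpartP e f) (hpartP e g).
Proof.
apply: functional_extensionality => t.
by rewrite /hpartP /fadd; case: ifP => //; rewrite addr0. Qed.

Lemma hpartPZ e c f : hpartP e (fscale c f) = fscale c (hpartP e f).
Proof.
apply: functional_extensionality => t.
by rewrite /hpartP /fscale; case: ifP => //; rewrite mulr0. Qed.

Lemma hpartP0 e : hpartP e (@fzero K (pmon n)) = @fzero K (pmon n).
Proof. by apply: functional_extensionality => t; rewrite /hpartP /fzero; case: ifP. Qed.

Lemma hpartP_xmul0 v f : hpartP 0 (xmul v f) = @fzero K (pmon n).
Proof.
apply: functional_extensionality => t; rewrite /hpartP /fzero /xmul.
by case: eqP => // /eqP; rewrite size_eq0 => /eqP ->; rewrite andbF.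
Qed.

Lemma hpartP_xmulS e v f : hpartP e.+1 (xmul v f) = xmul v (hpartP e f).
Proof.
apply: functional_extensionality => t; rewrite /hpartP /xmul.
case: (boolP (validP t && (v \in t))) => [/andP[_ vt]|_]; last by case: ifP.
by rewrite size_rem //; case: (t) vt.
Qed.

Lemma hpartP_mono_nil e :
  hpartP e (mono K [::]) = if e == 0%N then mono K [::] else @fzero K (pmon n).
Proof.
apply: functional_extensionality => t; rewrite /hpartP /mono /fzero.
case: (eqVneq t [::]) => [->|nt]; first by case: e.
by case: (size t == e); case: (e == 0%N); rewrite /= ?(negbTE nt).
Qed.

Lemma Jpre_hpart_Qgen e i k j : (0 < j)%N ->
  Jpre I (hpartP e (xmul (i, j) (xmul (k, j) (mono K [::])))).
Proof.
move=> j0; case: e => [|[|e]]; first by rewrite hpartP_xmul0; exact: ig_zero.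
  by rewrite hpartP_xmulS hpartP_xmul0 xmul0; exact: ig_zero.
rewrite !hpartP_xmulS hpartP_mono_nil; case: eqP => _; last by rewrite !xmul0; exact: ig_zero.
by apply: ig_base; left; exists i, k, j.
Qed.

Lemma Jpre_hpart f : Jpre I f -> forall e, Jpre I (hpartP e f).
Proof.
elim => {f}.
- move=> f0 [[i [k [j [j0 ->]]]] | [k [g [Ig ->]]]] e; first exact: Jpre_hpart_Qgen.
  have -> : hpartP e (iter k (@sigmaP K n) (iotaF g)) = siota k (hpartF e g).
    apply: functional_extensionality => t; rewrite -/(siota k g) /hpartP /hpartF !siotaE size_map.
    by case: ifP; case: ifP.
  by apply: Jpre_siota; exact: (gi_graded HI).
- by move=> e; rewrite hpartP0; exact: ig_zero.
- by move=> f g _ IHf _ IHg e; rewrite hpartPD; exact: ig_add (IHf e) (IHg e).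
- by move=> c f _ IH e; rewrite hpartPZ; exact: ig_scale (IH e).
- move=> v f v0 _ IH [|e]; first by rewrite hpartP_xmul0; exact: ig_zero.
  by rewrite hpartP_xmulS; exact: ig_xmul v0 (IH e).
Qed.

Lemma Jpre_mulmon u f : all (fun p : pvar n => 0 < p.2)%N u -> Jpre I f -> Jpre I (mulmon u f).
Proof. by elim: u => [|v u IH] //= /andP[v0 hu] Jf; exact: ig_xmul v0 (IH hu Jf). Qed.

Lemma Jpre_mono_repeated_col (t : pmon n) : validP t -> ~~ uniq (map snd t) -> Jpre I (mono K t).
Proof.
move=> vt /not_uniq_mapP[a [b [ain bt eab]]].
set u := rem b (rem a t).
have pt : perm_eq t (u ++ [:: a; b]).
  rewrite perm_sym perm_catC /= perm_sym; apply: perm_trans (perm_to_rem ain) _.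
  by rewrite perm_cons; exact: perm_to_rem bt.
have pos : all (fun p : pvar n => 0 < p.2)%N t by case/andP: vt.
have -> : mono K t = mulmon (u ++ [:: a; b]) (mono K [::]).
  apply: functional_extensionality => t'.
  case vt': (validP t'); last first.
    rewrite mulmon_invalid ?vt' //; last by case: (u).
    by rewrite /mono; case: eqP => // e; rewrite e vt in vt'.
  rewrite mulmonE // /mono.
  have -> : (t' == t) = (mdiv (u ++ [:: a; b]) t' == Some [::]).
    apply/eqP/eqP => [->|/mdiv_nilP h]; first exact/mdiv_nilP.
    apply: (sorted_eq lek_trans lek_anti); [by case/andP: vt' | by case/andP: vt |].
    by apply: perm_trans h _; rewrite perm_sym.
  by case: (mdiv _ _) => [s|].
rewrite mulmon_cat; apply: Jpre_mulmon.
  by apply/allP => x xu; exact: (allP pos) (mem_rem (mem_rem xu)).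
apply: ig_base; left; exists a.1, b.1, a.2; split; first exact: (allP pos).
by rewrite [in X in xmul _ (xmul X _)]eab -!surjective_pairing.
Qed.

Lemma Jpre_of_repeated_cols (s : seq (pmon n)) (f : Ppoly K n) :
  (forall t, f t != 0 -> t \in s) ->
  (forall t, f t != 0 -> validP t && ~~ uniq (map snd t)) -> Jpre I f.
Proof.
elim: s f => [|t0 s IH] f hs hb.
  have -> : f = @fzero K (pmon n); last exact: ig_zero.
  by apply: functional_extensionality => t; rewrite /fzero; case: (eqVneq (f t) 0) => // /hs.
case: (eqVneq (f t0) 0) => [f0|nz].
  apply: (IH f) => // t ft; have := hs t ft; rewrite in_cons; case: eqP => //= e.
  by rewrite e f0 eqxx in ft.
pose f' := fun t => if t == t0 then 0 else f t.
have -> : f = fadd (fscale (f t0) (mono K t0)) f'.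
  apply: functional_extensionality => t; rewrite /fadd /fscale /mono /f'.
  by case: eqP => [->|_]; rewrite ?mulr1 ?addr0 // mulr0 add0r.
apply: ig_add; first by apply: ig_scale; case/andP: (hb t0 nz); exact: Jpre_mono_repeated_col.
apply: IH => t; rewrite /f'; case: (eqVneq t t0) => [->|ne]; rewrite ?eqxx //= ?(negbTE ne) => ft.
  by have := hs t ft; rewrite in_cons (negbTE ne).
exact: hb.
Qed.

(* Pigeonhole: d - o distinct columns among o+1, ..., d are all of them. *)
Lemma placed_of_uniq_cols o (t : pmon n) : validP t ->
  all (fun p : pvar n => (o < p.2 <= d)%N) t -> (size t + o)%N = d ->
  uniq (map snd t) -> placed o t.
Proof.
move=> /andP[st _] rng sz ut.
have sl : sorted ltn (map snd t).
  rewrite ltn_sorted_uniq_leq ut sorted_map /=.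
  by apply: sub_sorted st => a b; rewrite /lek /=; lia.
have sub : {subset map snd t <= iota o.+1 (size t)}.
  move=> c /mapP[[a b] pt ->]; rewrite mem_iota; have := allP rng _ pt; rewrite /=; lia.
have szi : (size (iota o.+1 (size t)) <= size (map snd t))%N by rewrite size_iota size_map.
have [_ eqm] := uniq_min_size ut sub szi.
have e : map snd t = iota o.+1 (size t).
  apply: (irr_sorted_eq ltn_trans) => //; first by move=> x; rewrite ltnn.
  exact: iota_ltn_sorted.
by apply/eqP; rewrite /place size_map -e -/(unzip1 t) -/(unzip2 t) zip_unzip.
Qed.

Lemma Jpre_hpart_Ksub o h : (o <= d)%N -> in_Ksub o d h ->
  Jpre I (fsub (hpartP (d - o) h) (placed_part o (hpartP (d - o) h))).
Proof.
move=> od [[s hs] hcols].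
set f := fsub _ _.
have supp t : f t != 0 -> [/\ h t != 0, size t = (d - o)%N & ~~ placed o t].
  rewrite /f /fsub /hpartP /placed_part.
  case: (size t =P (d - o)%N) => [st|]; last by rewrite if_same subrr eqxx.
  have -> : (size t + o == d)%N by apply/eqP; lia.
  by rewrite andbT; case: ifP => pl; rewrite ?subrr ?eqxx // subr0.
apply: (@Jpre_of_repeated_cols s) => t /supp[ht st pl]; first by case/andP: (hs t ht).
have /andP[_ vt] := hs t ht; rewrite vt /=.
apply: contra pl => ut; apply: placed_of_uniq_cols => //; [exact: hcols | lia].
Qed.

Lemma Jpre_sub_placed_part o (g h1 h2 : Ppoly K n) :
  in_Ksub o d h1 -> Jpre I (fsub g h1) ->
  (forall t, h2 t != 0 -> (size t + o)%N = d) -> Jpre I (fsub g h2) ->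
  Jpre I (fsub g (placed_part o g)).
Proof.
move=> k1 J1 hh2 J2.
case: (leqP o d) => od; last first.
  have -> : fsub g (placed_part o g) = fsub g h2 => //.
  apply: functional_extensionality => t; rewrite /fsub /placed_part.
  have -> : (size t + o == d)%N = false by apply/negbTE/eqP; lia.
  by rewrite andbF; case: (eqVneq (h2 t) 0) => [->//|/hh2]; lia.
set R := hpartP (d - o).
have J21 : Jpre I (fsub h2 (R h1)).
  have -> : fsub h2 (R h1) = fsub (R (fsub g h1)) (R (fsub g h2)).
    apply: functional_extensionality => t; rewrite /fsub /R /hpartP.
    case: eqP => [e|ne]; first by ring.
    by case: (eqVneq (h2 t) 0) => [->|/hh2 h]; [rewrite !subrr | lia].
  by apply: Jpre_sub; exact: Jpre_hpart.
(* g = (g - h2) + (h2 - R h1) + R h1, and each summand minus its placed part is in J *)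
have -> : fsub g (placed_part o g) =
  fadd (fadd (fsub (fsub g h2) (placed_part o (fsub g h2)))
             (fsub (fsub h2 (R h1)) (placed_part o (fsub h2 (R h1)))))
       (fsub (R h1) (placed_part o (R h1))).
  apply: functional_extensionality => t; rewrite /fsub /fadd /placed_part.
  by case: ifP => _; ring.
apply: ig_add; last exact: Jpre_hpart_Ksub.
by apply: ig_add; apply: Jpre_sub => //; exact: Jpre_placed_part.
Qed.



(* With k = o the block comes first, so the frame condition no longer depends on o. *)
Definition tail_placed (u : pmon n) : bool :=
  uniq u && (sort (@lek n) u == place (d - size u) (mon_word u)).

Lemma pre_len_same o u : pre_len o o u = 0%N.
Proof. by rewrite /pre_len subnn if_same. Qed.

Lemma frame_same o (u : pmon n) : frame o o u = tail_placed u && (o + size u <= d)%N.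
Proof.
rewrite /frame /tail_placed /pre_word /suf_word pre_len_same take0 drop0 /= leqnn subnn /= orbT /=.
case: (uniq u) => //=; case h: (o + size u <= d)%N; rewrite ?andbF ?andbT //.
by rewrite (_ : o + 0 + gap o u = d - size u)%N // /gap; lia.
Qed.

Section Module.
Variables (r : nat) (delta : 'I_r -> nat) (M : Fvec K n r -> Prop).
Hypothesis HM : graded_right_submodule I delta M.

Lemma homvec0 : homvecF delta d (@vzero K (word n) r).
Proof. by move=> i w; rewrite /vzero /fzero eqxx. Qed.

Lemma homvecD (m1 m2 : Fvec K n r) :
  homvecF delta d m1 -> homvecF delta d m2 -> homvecF delta d (vadd m1 m2).
Proof.
move=> h1 h2 i w; rewrite /vadd /fadd; case: (eqVneq (m1 i w) 0) => [->|/h1 //].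
by rewrite add0r; exact: h2.
Qed.

Lemma homvecZ c (m : Fvec K n r) : homvecF delta d m -> homvecF delta d (vscale c m).
Proof.
move=> h i w; rewrite /vscale /fscale; case: (eqVneq (m i w) 0) => [->|/h //].
by rewrite mulr0 eqxx.
Qed.

Lemma homvec_hvec (m : Fvec K n r) : homvecF delta d (hvecF delta d m).
Proof. by move=> i w; rewrite /hvecF; case: ifP => [/eqP //|_]; rewrite eqxx. Qed.

(* Placed parts of u * iota(m0) come from the element m0 * (word of u) of M. *)
Lemma placed_part_iota_M u (m0 : Fvec K n r) : M m0 ->
  exists m, [/\ M m, homvecF delta d m &
    (fun i => placed_part (delta i) (mulmon u (iota_vec delta m0 i))) = iota_vec delta m].
Proof.
move=> Mm0.
exists (if tail_placed u then hvecF delta d (fun i => mulF (m0 i) (wmono (mon_word u)))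
        else @vzero K (word n) r).
split.
- case: (tail_placed u); last exact: (gm_zero HM).
  by apply: (gm_graded HM); exact: (gm_rmul HM (wmono_poly _) Mm0).
- by case: (tail_placed u); [exact: homvec_hvec | exact: homvec0].
apply: functional_extensionality => i; rewrite /iota_vec -!/(siota _ _).
rewrite placed_part_coef -placed_coef_part; congr (siota _ _).
apply: functional_extensionality => w.
rewrite placed_coef_mulmon_siota frame_same /pre_word /suf_word pre_len_same take0 drop0.
rewrite mulF_wmono_nil; case: (tail_placed u) => /=; last by rewrite andbF.
rewrite /hvecF; case: eqP => //= hw; case: ifP => // hu.
rewrite mulF_wmonoR size_mon_word.
have -> : (size w - size u = 0)%N by move/negbT: hu; rewrite -ltnNge; lia.
rewrite drop0; case: eqP => // ew.
by have := size_mon_word u; rewrite -ew; move/negbT: hu; rewrite -ltnNge; lia.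
Qed.

Lemma placed_part_L (g : Pvec K n r) : Lpre I delta M g -> forall u,
  exists m, [/\ M m, homvecF delta d m &
    (fun i => placed_part (delta i) (mulmon u (g i))) = iota_vec delta m].
Proof.
elim => {g}.
- move=> g [[m0 [Mm0 ->]] | Jg] u; first exact: placed_part_iota_M.
  have /fin_all_exists[x hx] := fun i => placed_part_J (Jg i) (delta i) u.
  exists x; split; first by apply: (gm_satI HM) => i; case: (hx i) => [[]].
    by move=> i w; case: (hx i) => [[_ h] _]; exact: h.
  by apply: functional_extensionality => i; case: (hx i) => _ ->.
- move=> u; exists (@vzero K (word n) r); split; [exact: (gm_zero HM) | exact: homvec0 |].
  apply: functional_extensionality => i; rewrite /vzero mulmon0 placed_part0.
  exact: (esym (siota0 (delta i))).
- move=> g h _ IHg _ IHh u.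
  have [m1 [M1 H1 E1]] := IHg u; have [m2 [M2 H2 E2]] := IHh u.
  exists (vadd m1 m2); split; [exact: (gm_add HM) | exact: homvecD |].
  apply: functional_extensionality => i.
  have e1 := congr1 (fun F => F i) E1; have e2 := congr1 (fun F => F i) E2; simpl in e1, e2.
  by rewrite /vadd mulmonD placed_partD e1 e2; exact: (esym (siotaD _ _ _)).
- move=> c g _ IH u.
  have [m1 [M1 H1 E1]] := IH u.
  exists (vscale c m1); split; [exact: (gm_scale HM) | exact: homvecZ |].
  apply: functional_extensionality => i.
  have e1 := congr1 (fun F => F i) E1; simpl in e1.
  by rewrite /vscale mulmonZ placed_partZ e1; exact: (esym (siotaZ _ _ _)).
- move=> v g _ _ IH u.
  have -> : (fun i => placed_part (delta i) (mulmon u (xmul v (g i)))) =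
            (fun i => placed_part (delta i) (mulmon (rcons u v) (g i))).
    by apply: functional_extensionality => i; rewrite mulmon_rcons.
  exact: IH.
Qed.

Lemma iotaMd_preP (g : Pvec K n r) : iotaMd_pre I delta M d g <-> Mpd_pre I delta M d g.
Proof.
split.
  move=> [m [Mm [hm Jg]]]; split; [|split].
  - have -> : g = vadd (iota_vec delta m) (vsub g (iota_vec delta m)).
      apply: functional_extensionality => i; apply: functional_extensionality => t.
      by rewrite /vadd /vsub /fadd /fsub; ring.
    by apply: sg_add; apply: sg_base; [left; exists m | right].
  - exists (iota_vec delta m); split => // i; split; first exact: siota_poly (gm_poly HM Mm i).
    move=> t /siota_supp [w -> /(hm i) hw].
    by apply: sub_all (cols_place (delta i) w) => -[a b] /=; lia.
  - exists (iota_vec delta m); split => [i|]; first exact: siota_poly (gm_poly HM Mm i).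
    split => // i t /siota_supp [w -> xw]; rewrite size_place; exact: hm i w xw.
move=> [Lg [[h1 [k1 J1]] [h2 [_ [hh2 J2]]]]].
have [m [Mm hm E]] := placed_part_L Lg [::].
exists m; split => //; split => // i.
rewrite /vsub -(congr1 (fun F => F i) E) /=.
exact: Jpre_sub_placed_part (k1 i) (J1 i) (hh2 i) (J2 i).
Qed.

Definition hword := {i : 'I_r & (d - delta i)%N.-tuple 'I_n}.

(* Homogeneous vectors of degree d live in the K-space with basis hword. *)
Lemma homvec_free_size k (v : 'I_k -> Fvec K n r) : (forall j, homvecF delta d (v j)) ->
  (forall c : 'I_k -> K, lcomb c v = @vzero K (word n) r -> forall j, c j = 0) ->
  (k <= #|{: hword}|)%N.
Proof.
move=> hv hind; rewrite leqNgt; apply/negP => hk.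
pose A : 'M[K]_(k, #|{: hword}|) :=
  \matrix_(j, l) v j (tag (enum_val l)) (tval (tagged (enum_val l))).
have kz : kermx A != 0.
  by rewrite -mxrank_eq0 mxrank_ker subn_eq0 -ltnNge; exact: leq_ltn_trans (rank_leq_col A) hk.
have /existsP[i0 /existsP[j0 nz]] : [exists i, [exists j, kermx A i j != 0]].
  apply: contraNT kz => /existsPn h; apply/eqP/matrixP => i j; rewrite [RHS]mxE.
  by move: (h i) => /existsPn /(_ j) /negPn /eqP.
pose c j := kermx A i0 j.
suff hc : lcomb c v = @vzero K (word n) r by move: nz; rewrite -/(c j0) (hind c hc j0) eqxx.
apply: functional_extensionality => i; apply: functional_extensionality => w.
rewrite /lcomb /vzero /fzero.
case: (eqVneq (size w + delta i)%N d) => [sw|nsw]; last first.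
  apply: big1 => j _; case: (eqVneq (v j i w) 0) => [->|/hv h]; first by rewrite mulr0.
  by move/eqP: nsw.
have sw' : size w == (d - delta i)%N by apply/eqP; lia.
pose x : hword := Tagged (fun i => (d - delta i)%N.-tuple 'I_n) (Tuple sw').
have := congr1 (fun B : 'M[K]_(k, #|{: hword}|) => B i0 (enum_rank x)) (mulmx_ker A).
rewrite /= [X in _ = X]mxE [X in X = _]mxE => e; apply: etrans e.
by apply: eq_bigr => j _; rewrite /A [X in _ = _ * X]mxE enum_rankK.
Qed.

Lemma Ivec_lcomb k (c : 'I_k -> K) (v : 'I_k -> Fvec K n r) :
  (forall j, Ivec I (v j)) -> Ivec I (lcomb c v).
Proof.
move=> hv i; apply: (lcomb_closed (P := I)) => //.
- exact: (gi_zero HI).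
- exact: (gi_add HI).
- exact: (gi_scale HI).
- by move=> j; exact: hv.
Qed.

Lemma homvec_lcomb k (c : 'I_k -> K) (v : 'I_k -> Fvec K n r) :
  (forall j, homvecF delta d (v j)) -> homvecF delta d (lcomb c v).
Proof.
move=> hv i w; rewrite /lcomb; case: (eqVneq (size w + delta i)%N d) => [e|ne] //.
rewrite big1 ?eqxx // => j _; case: (eqVneq (v j i w) 0) => [->|/hv h]; first by rewrite mulr0.
by move/eqP: ne.
Qed.

Lemma lcomb_split k (c : 'I_k -> K) (T : Type) (b m0 : 'I_k -> 'I_r -> T -> K) :
  lcomb c b = vadd (lcomb c m0) (lcomb c (fun j => vsub (b j) (m0 j))).
Proof.
apply: functional_extensionality => i; apply: functional_extensionality => t.
by rewrite /lcomb /vadd /fadd /vsub /fsub -big_split; apply: eq_bigr => j _ /=; ring.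
Qed.

Lemma Ivec_add (x y : Fvec K n r) : Ivec I x -> Ivec I y -> Ivec I (vadd x y).
Proof. by move=> hx hy i; exact: (gi_add HI). Qed.

Lemma Ivec_scale a (x : Fvec K n r) : Ivec I x -> Ivec I (vscale a x).
Proof. by move=> hx i; exact: (gi_scale HI). Qed.

Lemma iota_vec_lcomb k (c : 'I_k -> K) (m0 : 'I_k -> Fvec K n r) :
  iota_vec delta (lcomb c m0) = lcomb c (fun j => iota_vec delta (m0 j)).
Proof.
apply: functional_extensionality => i; apply: functional_extensionality => t.
change (siota (delta i) (lcomb c m0 i) t = \sum_(j < k) c j * siota (delta i) (m0 j i) t).
rewrite siotaE; under eq_bigr do rewrite siotaE.
by case: ifP => _ //; rewrite big1 // => j _; rewrite mulr0.
Qed.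

Lemma iota_vec_sub (a b : Fvec K n r) :
  iota_vec delta (vsub a b) = vsub (iota_vec delta a) (iota_vec delta b).
Proof.
apply: functional_extensionality => i; apply: functional_extensionality => t.
change (siota (delta i) (fsub (a i) (b i)) t = siota (delta i) (a i) t - siota (delta i) (b i) t).
by rewrite !siotaE; case: ifP => _ //; rewrite subr0.
Qed.

Lemma Ivec_of_Jvec_iota (m : Fvec K n r) :
  homvecF delta d m -> Jvec I (iota_vec delta m) -> Ivec I m.
Proof.
move=> hm Jm i; have [x [[Ix _] e]] := placed_part_J (Jm i) (delta i) [::].
suff -> : m i = x by [].
have {}e : siota (delta i) (m i) = siota (delta i) x.
  rewrite -e; apply: functional_extensionality => t; rewrite /placed_part /= -/(siota _ _).
  case: ifP => // hl; rewrite siotaE; case: ifP => // /placedP [w ew].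
  case: (eqVneq (m i (map fst t)) 0) => // /hm; move: hl.
  by rewrite ew placed_place size_place map_fst_place /= => /eqP.
apply: functional_extensionality => w.
by have := congr1 (fun F => F (place (delta i) w)) e; rewrite !siota_place.
Qed.

Lemma Md_pre_reps k (b : 'I_k -> Fvec K n r) : (forall j, Md_pre I delta M d (b j)) ->
  exists m0 : 'I_k -> Fvec K n r,
    forall j, [/\ M (m0 j), homvecF delta d (m0 j) & Ivec I (vsub (b j) (m0 j))].
Proof.
move=> hb; suff /fin_all_exists : forall j, exists m : Fvec K n r,
    [/\ M m, homvecF delta d m & Ivec I (vsub (b j) m)] by [].
by move=> j; have [m [Mm [hm Im]]] := hb j; exists m.
Qed.

Lemma qdim_Md_pre : exists k, qdim (Md_pre I delta M d) (Ivec I) k.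
Proof.
apply: (@qdim_of_bounded _ _ _ _ _ (fun a => @Ivec_scale a) #|{: hword}|) => k b [Ub indb].
have [m0 hm0] := Md_pre_reps Ub.
apply: (@homvec_free_size k m0); first by move=> j; case: (hm0 j).
move=> c hc; apply: indb; rewrite (lcomb_split c b m0) hc.
apply: Ivec_add; first by move=> i; exact: (gi_zero HI).
by apply: Ivec_lcomb => j; case: (hm0 j).
Qed.

Lemma qdim_Mpd_pre k :
  qdim (Md_pre I delta M d) (Ivec I) k -> qdim (Mpd_pre I delta M d) (Jvec I) k.
Proof.
move=> [b [Ub [indb spb]]]; have [m0 hm0] := Md_pre_reps Ub.
have Irep c : Ivec I (lcomb c (fun j => vsub (b j) (m0 j))).
  by apply: Ivec_lcomb => j; case: (hm0 j).
exists (fun j => iota_vec delta (m0 j)); split; [|split].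
- move=> j; apply/iotaMd_preP; exists (m0 j); case: (hm0 j) => Mj hj _; split => //; split => //.
  by move=> i; rewrite (_ : vsub _ _ i = @fzero K (pmon n)); [exact: ig_zero |];
    apply: functional_extensionality => t; rewrite /vsub /fsub subrr.
- move=> c Jc; apply: indb; rewrite (lcomb_split c b m0); apply: Ivec_add => //.
  apply: Ivec_of_Jvec_iota; first by apply: homvec_lcomb => j; case: (hm0 j).
  by rewrite iota_vec_lcomb.
move=> g /iotaMd_preP [m [Mm [hm Jg]]].
have [c Ic] : exists c, Ivec I (vsub m (lcomb c b)).
  apply: spb; exists m; split => //; split => // i.
  by rewrite (_ : vsub m m i = @fzero K (word n)); [exact: (gi_zero HI) |];
    apply: functional_extensionality => t; rewrite /vsub /fsub subrr.
exists c.
have -> : vsub g (lcomb c (fun j => iota_vec delta (m0 j))) =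
    vadd (vsub g (iota_vec delta m)) (iota_vec delta (vsub m (lcomb c m0))).
  rewrite iota_vec_sub iota_vec_lcomb.
  apply: functional_extensionality => i; apply: functional_extensionality => t.
  by rewrite /vsub /vadd /fsub /fadd; ring.
have Im : Ivec I (vsub m (lcomb c m0)).
  have -> : vsub m (lcomb c m0) = vadd (vsub m (lcomb c b)) (lcomb c (fun j => vsub (b j) (m0 j))).
    rewrite (lcomb_split c b m0).
    apply: functional_extensionality => i; apply: functional_extensionality => t.
    by rewrite /vsub /vadd /fsub /fadd; ring.
  exact: Ivec_add.
by move=> i; apply: ig_add; [exact: Jg | exact: Jpre_siota (Im i)].
Qed.

End Module.
End IdealJ.
End FixedDegree.

Theorem mainTheorem8 (K : fieldType) (n r : nat) (delta : 'I_r -> nat)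
    (I : Fpoly K n -> Prop) (HI : graded_twosided_ideal I)
    (M : Fvec K n r -> Prop) (HM : graded_right_submodule I delta M)
    (d : nat) :
  (forall g : Pvec K n r, iotaMd_pre I delta M d g <-> Mpd_pre I delta M d g) /\
  (exists k : nat,
     qdim (Md_pre I delta M d) (Ivec I) k /\
     qdim (Mpd_pre I delta M d) (Jvec I) k).
Proof.
split=> [g|]; first exact (iotaMd_preP d HI HM g).
have [k hk] := qdim_Md_pre d HI delta M.
by exists k; split => //; exact (qdim_Mpd_pre HI HM hk).
Qed.
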